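(* Let $Q$ be a flat $\mathrm{SYNCSIMPLE}$-process that is must-convergent. Then the process $!0\mid ?0\mid Q$ is also must-convergent.
   Context: $\mathrm{SYNCSIMPLE}$: subprocesses are $\mathcal{U} ::= \checkmark \mid 0 \mid\, !\mathcal{U} \mid\, ?\mathcal{U}$; a process is a finite parallel composition $\mathcal{U}_1\mid\cdots\mid\mathcal{U}_n$, where $\mid$ is associative and commutative and $0$ is a unit. The only reduction step is $!\mathcal{U}_1\mid ?\mathcal{U}_2\mid \mathcal{P}\to \mathcal{U}_1\mid\mathcal{U}_2\mid\mathcal{P}$. A process is successful if it has the form $\checkmark\mid\mathcal{P}$; may-convergent if it reduces in zero or more steps to a successful process; must-convergent if every process reachable from it in zero or more steps is may-convergent. A process is flat if it has the form $A_1\mid\cdots\mid A_n$ where each $A_i$ is one of $!0$, $?0$, $!\checkmark$, $?\checkmark$. *)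

From Stdlib Require Import List Permutation Relations.
Import ListNotations.

Inductive subproc : Type :=
| Tick : subproc
| Zero : subproc
| Snd : subproc -> subproc
| Rcv : subproc -> subproc.

(* A process U1 | ... | Un is a list of subprocesses; associativity and
   commutativity of | are accounted for by working up to Permutation,
   and 0 being a unit is harmless since Zero components never react and
   are never "checkmark". *)
Definition process := list subproc.

Definition step (P P' : process) : Prop :=
  exists U1 U2 R, Permutation P (Snd U1 :: Rcv U2 :: R) /\ P' = U1 :: U2 :: R.

Definition steps : process -> process -> Prop := clos_refl_trans process step.

Definition successful (P : process) : Prop := In Tick P.

Definition may_convergent (P : process) : Prop :=
  exists P', steps P P' /\ successful P'.

Definition must_convergent (P : process) : Prop :=
  forall P', steps P P' -> may_convergent P'.

(* flat: each component is !0, ?0, !tick, ?tick (Zero components allowed,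
   as 0 is the unit of |). *)
Definition flat_atom (U : subproc) : Prop :=
  U = Snd Zero \/ U = Rcv Zero \/ U = Snd Tick \/ U = Rcv Tick \/ U = Zero.

Definition flat (P : process) : Prop := Forall flat_atom P.

(* In a flat process every reduction either fires [!0 | ?0], leaving [0 | 0],
   or releases a ✓.  Hence a run of [!0 | ?0 | Q] that has not produced ✓
   consists, up to inert [0] components, of the prefixes of a reduct of [Q],
   possibly together with one extra [!0 | ?0] pair: whenever the run consumes
   a pair while the extra one is still around, the multiset of remaining
   prefixes is as if the extra pair had been consumed, and otherwise [Q] can
   consume a pair itself.  Adding parallel components never destroys
   may-convergence, so every such process inherits it from the reduct of [Q]. *)

From Stdlib Require Import List Permutation Relations.
Import ListNotations.

Definition flat_tick_atom (U : subproc) : Prop := flat_atom U \/ U = Tick.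

Definition flat_tick (P : process) : Prop := Forall flat_tick_atom P.

Lemma flat_flat_tick (P : process) : flat P -> flat_tick P.
Proof. apply Forall_impl. now left. Qed.

Lemma flat_tick_atom_Snd (U : subproc) :
  flat_tick_atom (Snd U) -> U = Zero \/ U = Tick.
Proof.
  intros [[E | [E | [E | [E | E]]]] | E]; inversion E; auto.
Qed.

Lemma flat_tick_atom_Rcv (U : subproc) :
  flat_tick_atom (Rcv U) -> U = Zero \/ U = Tick.
Proof.
  intros [[E | [E | [E | [E | E]]]] | E]; inversion E; auto.
Qed.

Lemma flat_tick_atom_Zero_or_Tick (U : subproc) :
  U = Zero \/ U = Tick -> flat_tick_atom U.
Proof. unfold flat_tick_atom, flat_atom. tauto. Qed.

Lemma flat_tick_step (P P' : process) :
  step P P' -> flat_tick P -> flat_tick P'.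
Proof.
  intros [U1 [U2 [R [HP ->]]]] HfP.
  apply (Permutation_Forall HP) in HfP.
  inversion HfP as [| ? ? H1 Hf2]; inversion Hf2 as [| ? ? H2 HfR]; subst.
  constructor; [| constructor]; trivial; apply flat_tick_atom_Zero_or_Tick.
  - exact (flat_tick_atom_Snd _ H1).
  - exact (flat_tick_atom_Rcv _ H2).
Qed.

Lemma flat_tick_steps (P P' : process) :
  steps P P' -> flat_tick P -> flat_tick P'.
Proof. induction 1; eauto using flat_tick_step. Qed.

Lemma step_perm_l (P P' X : process) :
  Permutation P P' -> step P X -> step P' X.
Proof.
  intros HP [U1 [U2 [R [HX ->]]]].
  exists U1, U2, R. split; [| reflexivity].
  now apply Permutation_trans with P; [symmetry |].
Qed.

Lemma step_app_r (P P' W : process) : step P P' -> step (P ++ W) (P' ++ W).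
Proof.
  intros [U1 [U2 [R [HP ->]]]].
  exists U1, U2, (R ++ W). split; [| reflexivity].
  exact (Permutation_app_tail W HP).
Qed.

Lemma steps_app_r (P P' W : process) : steps P P' -> steps (P ++ W) (P' ++ W).
Proof.
  induction 1; [apply rt_step, step_app_r | apply rt_refl | eapply rt_trans]; eauto.
Qed.

Lemma may_convergent_perm (P P' : process) :
  Permutation P P' -> may_convergent P -> may_convergent P'.
Proof.
  intros HP [X [HPX HX]].
  apply clos_rt_rt1n in HPX.
  destruct HPX as [| Y X HPY HYX].
  - exists P'. split; [apply rt_refl | exact (Permutation_in _ HP HX)].
  - exists X. split; [| exact HX].
    apply rt_trans with Y; [apply rt_step, (step_perm_l P) | apply clos_rt1n_rt]; trivial.
Qed.

Lemma may_convergent_app_r (P W : process) :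
  may_convergent P -> may_convergent (P ++ W).
Proof.
  intros [X [HPX HX]].
  exists (X ++ W). split; [now apply steps_app_r | now apply in_or_app; left].
Qed.

Definition padded (Y X : process) : Prop :=
  exists n, Permutation X (Y ++ repeat Zero n).

Lemma padded_refl (Y : process) : padded Y Y.
Proof. exists 0. now rewrite app_nil_r. Qed.

Lemma padded_perm (Y X X' : process) :
  Permutation X X' -> padded Y X -> padded Y X'.
Proof.
  intros HX [n HY]. exists n.
  now apply Permutation_trans with X; [symmetry |].
Qed.

Lemma padded_cons (a : subproc) (Y X : process) :
  padded Y X -> padded (a :: Y) (a :: X).
Proof. intros [n HX]. exists n. now apply perm_skip. Qed.

Lemma padded_cons_Zero (Y X : process) : padded Y X -> padded Y (Zero :: X).
Proof.
  intros [n HX]. exists (S n).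
  apply Permutation_trans with (Zero :: Y ++ repeat Zero n);
    [now apply perm_skip | apply Permutation_middle].
Qed.

Lemma padded_cons_inv (a : subproc) (Y X R : process) :
  padded (a :: Y) X -> Permutation X (a :: R) -> padded Y R.
Proof.
  intros [n HX] HXR. exists n.
  apply Permutation_cons_inv with a.
  now apply Permutation_trans with X; [symmetry |].
Qed.

Lemma padded_perm_cons (a : subproc) (Y X R : process) :
  a <> Zero -> padded Y X -> Permutation X (a :: R) ->
  exists RY, Permutation Y (a :: RY) /\ padded RY R.
Proof.
  intros Ha [n HX] HXR.
  assert (HaY : In a Y).
  { assert (Hin : In a (Y ++ repeat Zero n))
      by (apply (Permutation_in _ HX), (Permutation_in _ (Permutation_sym HXR)); now left).
    destruct (in_app_or _ _ _ Hin) as [Hin' | Hin']; [exact Hin' |].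
    now apply repeat_spec in Hin'. }
  destruct (in_split _ _ HaY) as [Y1 [Y2 ->]].
  exists (Y1 ++ Y2). split; [symmetry; apply Permutation_middle |].
  exists n. apply Permutation_cons_inv with a.
  rewrite <- app_assoc, app_comm_cons. apply Permutation_trans with X; [symmetry; exact HXR |].
  rewrite HX, <- app_assoc. symmetry. apply Permutation_middle.
Qed.

Lemma padded_may_convergent (Y X : process) :
  padded Y X -> may_convergent Y -> may_convergent X.
Proof.
  intros [n HX] HY.
  exact (may_convergent_perm _ _ (Permutation_sym HX) (may_convergent_app_r _ _ HY)).
Qed.

Section Simulation.

Variable Q : process.

Definition simulated (X : process) : Prop :=
  In Tick X \/
  exists Y, steps Q Y /\ (padded Y X \/ padded (Snd Zero :: Rcv Zero :: Y) X).

Lemma simulated_pair_step (R : process) :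
  simulated (Snd Zero :: Rcv Zero :: R) -> simulated (Zero :: Zero :: R).
Proof.
  intros [HT | [Y [HQY [HY | HY]]]].
  - left. right; right. destruct HT as [E | [E | HT]]; [discriminate | discriminate | exact HT].
  - destruct (padded_perm_cons (Snd Zero) Y (Snd Zero :: Rcv Zero :: R) (Rcv Zero :: R))
      as [Y1 [HY1 HR1]]; [discriminate | exact HY | reflexivity |].
    destruct (padded_perm_cons (Rcv Zero) Y1 (Rcv Zero :: R) R) as [RY [HRY HR]];
      [discriminate | exact HR1 | reflexivity |].
    right. exists (Zero :: Zero :: RY). split; [| left; now do 2 apply padded_cons].
    apply rt_trans with Y; [exact HQY |].
    apply rt_step. exists Zero, Zero, RY. split; [| reflexivity].
    now apply Permutation_trans with (Snd Zero :: Y1); [| apply perm_skip].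
  - right. exists Y. split; [exact HQY |]. left.
    do 2 apply padded_cons_Zero.
    apply (padded_cons_inv (Rcv Zero) _ (Rcv Zero :: R)); [| reflexivity].
    now apply (padded_cons_inv (Snd Zero) _ (Snd Zero :: Rcv Zero :: R)).
Qed.

(* Only the pair step needs work: any other step of a flat process releases ✓. *)
Lemma simulated_step (X X' : process) :
  flat_tick X -> step X X' -> simulated X -> simulated X'.
Proof.
  intros HfX Hs HX.
  destruct Hs as [U1 [U2 [R [HXR ->]]]].
  apply (Permutation_Forall HXR) in HfX.
  inversion HfX as [| ? ? H1 Hf2]; inversion Hf2 as [| ? ? H2 _]; subst.
  destruct (flat_tick_atom_Snd _ H1) as [-> | ->]; [| now left; left].
  destruct (flat_tick_atom_Rcv _ H2) as [-> | ->]; [| now left; right; left].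
  apply simulated_pair_step.
  destruct HX as [HT | [Y [HQY HY]]].
  - left. exact (Permutation_in _ HXR HT).
  - right. exists Y. split; [exact HQY |].
    destruct HY as [HY | HY]; [left | right]; exact (padded_perm _ _ _ HXR HY).
Qed.

Lemma simulated_steps (X X' : process) :
  steps X X' -> flat_tick X -> simulated X -> simulated X'.
Proof.
  intros HXX'. apply clos_rt_rt1n in HXX'.
  induction HXX' as [| X Y X' HXY _ IH]; intros HfX HX; [exact HX |].
  apply IH; [exact (flat_tick_step _ _ HXY HfX) | exact (simulated_step _ _ HfX HXY HX)].
Qed.

End Simulation.

Theorem lemma5p15 (Q : process) :
  flat Q -> must_convergent Q -> must_convergent (Snd Zero :: Rcv Zero :: Q).
Proof.
  intros HfQ HmQ X HX.
  assert (Hf : flat_tick (Snd Zero :: Rcv Zero :: Q)).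
  { apply flat_flat_tick. constructor; [| constructor]; [left | right; left | ]; auto. }
  assert (H0 : simulated Q (Snd Zero :: Rcv Zero :: Q)).
  { right. exists Q. split; [apply rt_refl | right; apply padded_refl]. }
  destruct (simulated_steps Q _ _ HX Hf H0) as [HT | [Y [HQY [HY | HY]]]].
  - exists X. split; [apply rt_refl | exact HT].
  - exact (padded_may_convergent _ _ HY (HmQ Y HQY)).
  - apply (padded_may_convergent _ _ HY).
    apply (may_convergent_perm (Y ++ [Snd Zero; Rcv Zero])); [apply Permutation_app_comm |].
    exact (may_convergent_app_r _ _ (HmQ Y HQY)).
Qed.
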